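(* Let $G_1,G_2$ be non-trivial countable amenable ICC groups and let $\nu$ be the probability measure on $G_1\times G_2$ of the construction described in the context. Then for $j=1,2$ the measure $\mathrm{pr}_j(\nu)$ on $G_j$ is Liouville, i.e. the Poisson–Furstenberg boundary $\partial(G_j,\mathrm{pr}_j(\nu))$ is trivial.
   Context: Notation: $B^n$ is the set of products of $n$ elements of $B$; a finite nonempty $F\subseteq G$ is $(A,\delta)$-invariant if $|AF\setminus F|<\delta|F|$; for finite $A\subseteq G$, $b\in G$ is an $A$-switcher if $A\cap AbA=\varnothing$ and $a'_1ba'_2=a''_1ba''_2$ with $a'_1,a'_2,a''_1,a''_2\in A$ implies $a'_1=a''_1$, $a'_2=a''_2$ (switchers exist for every finite set in a non-trivial ICC group). Construction: fix an enumeration $(c_{1,i},c_{2,i})_{i\in\mathbb N}$ of all elements of $G_1\times G_2$. Set $A_{j,1}=\{1_{G_j}\}$. For $i\ge1$, $j\in\{1,2\}$, $\bar j=3-j$: let $F_{j,i}\subseteq G_j$ be $(A_{j,i}^{i+1},1/i)$-invariant; let $S_{j,i}\subseteq G_j$ be any set with $|S_{j,i}|=|F_{\bar j,i}|$; let $b'_{j,i}$ be an $(A_{j,i}\cup S_{j,i}\cup F_{j,i})^{i+2}$-switcher; let $b''_{j,i}$ be an $(A_{j,i}\cup S_{j,i}\cup F_{j,i}\cup\{b'_{j,i}\})^{2i+8}$-switcher; let $A_{j,i+1}=A_{j,i}\cup F_{j,i}b'_{j,i}S_{j,i}b''_{j,i}\cup\{c_{j,i}\}$. Fix bijections $\psi_{j,i}:F_{\bar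 j,i}\to S_{j,i}$. Let $K$ be $\mathbb N$-valued with $\Pr(K=k)=k^{-5/4}/c$, and given $K$ let $Y$ be ''red'' with probability $2^{-K}$ and ''blue'' otherwise. Given $K=k$: if $Y$ is red, $X=(c_{1,k},c_{2,k})$; if $Y$ is blue, pick $f_1\in F_{1,k}$, $f_2\in F_{2,k}$ uniformly and independently and set $X=(f_1b'_{1,k}\psi_{1,k}(f_2)b''_{1,k},\ f_2b'_{2,k}\psi_{2,k}(f_1)b''_{2,k})$. Then $\nu$ is the law of $X$. The Poisson–Furstenberg boundary is the space of ergodic components of the shift on trajectories of the random walk; it is trivial if its $\sigma$-algebra is trivial mod 0. *)

From HB Require Import structures.
From mathcomp Require Import all_boot all_order all_algebra.
From mathcomp Require Import finmap.
From mathcomp Require Import all_classical all_reals all_analysis.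

Set Implicit Arguments.
Unset Strict Implicit.
Unset Printing Implicit Defensive.

Import Order.TTheory GRing.Theory Num.Theory.
Import numFieldNormedType.Exports.
Local Open Scope ring_scope.

Record grp_ops (G : Type) := GrpOps {
  gmul : G -> G -> G;
  gone : G;
  ginv : G -> G }.

Definition is_group (G : Type) (o : grp_ops G) : Prop :=
  (forall x y z, gmul o x (gmul o y z) = gmul o (gmul o x y) z) /\
  (forall x, gmul o (gone o) x = x) /\
  (forall x, gmul o x (gone o) = x) /\
  (forall x, gmul o (ginv o x) x = gone o) /\
  (forall x, gmul o x (ginv o x) = gone o).

Definition nontrivial_grp (G : Type) (o : grp_ops G) : Prop :=
  exists g : G, g <> gone o.

Definition ICC (G : Type) (o : grp_ops G) : Prop :=
  forall g : G, g <> gone o ->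
    ~ finite_set [set gmul o (gmul o h g) (ginv o h) | h in [set: G]]%classic.

Definition amenable (R : realType) (G : Type) (o : grp_ops G) : Prop :=
  exists m : set G -> R,
    m [set: G]%classic = 1 /\
    (forall A, 0 <= m A) /\
    (forall A B, (A `&` B = set0)%classic -> m (A `|` B)%classic = m A + m B) /\
    (forall g A, m [set gmul o g x | x in A]%classic = m A).

Local Open Scope fset_scope.

Definition fsmul (G : choiceType) (o : grp_ops G) (A B : {fset G}) : {fset G} :=
  [fset gmul o x y | x in A, y in B].

Fixpoint fspow (G : choiceType) (o : grp_ops G) (B : {fset G}) (n : nat)
  : {fset G} :=
  match n with
  | 0 => [fset gone o]
  | n'.+1 => fsmul o (fspow o B n') B
  end.

Definition invariant (R : realType) (G : choiceType) (o : grp_ops G)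
  (A : {fset G}) (delta : R) (F : {fset G}) : Prop :=
  F != fset0 /\ ((#|` (fsmul o A F `\` F)|)%:R < delta * (#|` F|)%:R)%R.

Definition switcher (G : choiceType) (o : grp_ops G) (A : {fset G}) (b : G)
  : Prop :=
  A `&` fsmul o (fsmul o A [fset b]) A = fset0 /\
  (forall a1 a2 a1' a2', a1 \in A -> a2 \in A -> a1' \in A -> a2' \in A ->
     gmul o (gmul o a1 b) a2 = gmul o (gmul o a1' b) a2' ->
     a1 = a1' /\ a2 = a2').

(* One side (j) of the construction, for i >= 1.  [c] is i |-> c_{j,i},
   [Fp] is the partner sequence F_{jbar,i}, [psi i] : F_{jbar,i} -> S_{j,i}
   is a bijection. *)
Definition construction_side (R : realType) (G G' : choiceType)
  (o : grp_ops G) (c : nat -> G)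
  (A F S : nat -> {fset G}) (Fp : nat -> {fset G'})
  (b1 b2 : nat -> G) (psi : nat -> G' -> G) : Prop :=
  A 1%N = [fset gone o] /\
  forall i : nat, (1 <= i)%N ->
    invariant o (fspow o (A i) i.+1) ((i%:R)^-1 : R) (F i) /\
    #|` S i| = #|` Fp i| /\
    switcher o (fspow o (A i `|` S i `|` F i) (i + 2)) (b1 i) /\
    switcher o (fspow o (A i `|` S i `|` F i `|` [fset b1 i]) (2 * i + 8))
      (b2 i) /\
    A i.+1 = A i `|` fsmul o (fsmul o (fsmul o (F i) [fset b1 i]) (S i))
                              [fset b2 i] `|` [fset c i] /\
    (forall x, x \in Fp i -> psi i x \in S i) /\
    (forall x y, x \in Fp i -> y \in Fp i -> psi i x = psi i y -> x = y) /\
    (forall s, s \in S i -> exists2 x, x \in Fp i & psi i x = s).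

Local Close Scope fset_scope.

Local Open Scope ring_scope.

Definition norm_const (R : realType) : R :=
  limn (fun n => \sum_(1 <= k < n) ((k%:R : R) `^ (- (5%:R / 4%:R)))).

Definition weightK (R : realType) (k : nat) : R :=
  ((k%:R : R) `^ (- (5%:R / 4%:R))) / norm_const R.

(* k-th term of E[phi(X_1)] given K = k, weighted by the colour:
   red (prob 2^-k): X_1 = c_{1,k};
   blue: X_1 = f1 b'_{1,k} psi_{1,k}(f2) b''_{1,k}, f_i uniform in F_{i,k}. *)
Definition cond_term (R : realType) (G G' : choiceType) (o : grp_ops G)
  (c : nat -> G) (F : nat -> {fset G}) (Fp : nat -> {fset G'})
  (b1 b2 : nat -> G) (psi : nat -> G' -> G) (phi : G -> R) (k : nat) : R :=
  (2%:R ^- k) * phi (c k) +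
  (1 - 2%:R ^- k) *
    ((\sum_(f1 <- F k) \sum_(f2 <- Fp k)
        phi (gmul o (gmul o (gmul o f1 (b1 k)) (psi k f2)) (b2 k)))
     / ((#|` F k|)%:R * (#|` Fp k|)%:R)).

(* E[phi(X_j)] = \int phi d(pr_j nu), as the (convergent) series over k >= 1;
   [expect_proj ... phi e] means this expectation equals e. *)
Definition expect_proj_is (R : realType) (G G' : choiceType) (o : grp_ops G)
  (c : nat -> G) (F : nat -> {fset G}) (Fp : nat -> {fset G'})
  (b1 b2 : nat -> G) (psi : nat -> G' -> G) (phi : G -> R) (e : R) : Prop :=
  ((fun n => \sum_(1 <= k < n) (weightK R k * cond_term o c F Fp b1 b2 psi phi k))
    @ \oo --> e)%classic.

Definition liouville_proj (R : realType) (G G' : choiceType) (o : grp_ops G)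
  (c : nat -> G) (F : nat -> {fset G}) (Fp : nat -> {fset G'})
  (b1 b2 : nat -> G) (psi : nat -> G' -> G) : Prop :=
  forall f : G -> R,
    (exists M : R, forall g, `|f g| <= M) ->
    (forall g, expect_proj_is o c F Fp b1 b2 psi (fun x => f (gmul o g x)) (f g)) ->
    forall g h, f g = f h.

From HB Require Import structures.
From mathcomp Require Import all_boot all_order all_algebra.
From mathcomp Require Import finmap.
From mathcomp Require Import all_classical all_reals all_analysis.
From mathcomp Require Import ring lra zify.

Set Implicit Arguments.
Unset Strict Implicit.
Unset Printing Implicit Defensive.
Import Order.TTheory GRing.Theory Num.Theory.
Import numFieldNormedType.Exports.
Local Open Scope ring_scope.

(** Let f be harmonic for pr_1(nu) with |f| <= M and let p_j = Pr(K < j).  A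
    step with K = k < j multiplies by an element of A_(k+1), a subset of A_j,
    while for K = k >= j the blue part of the step averages over the
    (A_k^(k+1), 1/k)-invariant set F_k, so left translation by an element of
    A_k^(k+1) moves its contribution by O(M/k).  Unfolding harmonicity j + 1
    times at g and at g a, for a in A_j, gives
    |f(g a) - f(g)| <= 2 M p_j^(j+1) + 6 M / j.  Since Pr(K >= j) is of
    order j^(-1/4), the right-hand side is O(1/N) for j = 8 N^4; and every a
    lies in some A_j because c enumerates G_1 x G_2. *)

Section Group.
Variables (G : Type) (o : grp_ops G).
Hypothesis grp : is_group o.

Lemma gmulA x y z : gmul o x (gmul o y z) = gmul o (gmul o x y) z.
Proof. by case: grp. Qed.

Lemma gmul1g x : gmul o (gone o) x = x.
Proof. by case: grp => _ []. Qed.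

Lemma gmulg1 x : gmul o x (gone o) = x.
Proof. by case: grp => _ [_ []]. Qed.

Lemma gmulgV x : gmul o x (ginv o x) = gone o.
Proof. by case: grp => _ [_ [_ []]]. Qed.

Lemma gmulI u : injective (gmul o u).
Proof.
move=> x y eq_uxy; case: grp => _ [_ [_ [mulVg _]]].
by rewrite -(gmul1g x) -(gmul1g y) -(mulVg u) -!gmulA eq_uxy.
Qed.

End Group.

(** * Finite products in a group *)

Local Open Scope fset_scope.

Section FiniteProducts.
Variables (G : choiceType) (o : grp_ops G).

Lemma mem_fsmul (A B : {fset G}) x y :
  x \in A -> y \in B -> gmul o x y \in fsmul o A B.
Proof. exact: in_imfset2. Qed.

Lemma fsmulP (A B : {fset G}) z :
  z \in fsmul o A B -> exists x y, [/\ x \in A, y \in B & z = gmul o x y].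
Proof. by move=> /imfset2P[x xA [y yB ->]]; exists x, y. Qed.

Lemma fspow_subset (A B : {fset G}) n :
  {subset A <= B} -> {subset fspow o A n <= fspow o B n}.
Proof.
move=> sAB; elim: n => [|n IHn] x //= /fsmulP[y [z [yAn zA ->]]].
by apply: mem_fsmul; [apply: IHn | apply: sAB].
Qed.

Hypothesis grp : is_group o.

Lemma mem_fspow1 (A : {fset G}) x : x \in A -> x \in fspow o A 1.
Proof. by move=> xA; rewrite -(gmul1g grp x); apply: mem_fsmul; rewrite ?in_fset1. Qed.

Lemma fspow_le (A : {fset G}) m n :
  gone o \in A -> (m <= n)%N -> {subset fspow o A m <= fspow o A n}.
Proof.
move=> oneA; elim: n => [|n IHn]; first by rewrite leqn0 => /eqP->.
rewrite leq_eqVlt ltnS => /predU1P[-> // | le_mn] x /(IHn le_mn) xAn.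
by rewrite -(gmulg1 grp x); apply: mem_fsmul.
Qed.

End FiniteProducts.

Lemma ler_norm_sum_seq (R : numDomainType) (T : eqType) (s : seq T) (h : T -> R) b :
  {in s, forall x, `|h x| <= b} -> `|\sum_(x <- s) h x| <= (size s)%:R * b.
Proof.
move=> hb; rewrite (le_trans (ler_norm_sum _ _ _)) // -sum1_size natr_sum mulr_suml.
by rewrite big_seq [leRHS]big_seq; apply: ler_sum => x xs; rewrite mul1r hb.
Qed.

Lemma ler_norm_sumB_card (R : numDomainType) (T : choiceType) (X Y : {fset T})
    (phi : T -> R) K :
  (forall x, `|phi x| <= K) -> #|` X| = #|` Y| ->
  `|\sum_(x <- X) phi x - \sum_(y <- Y) phi y| <= (#|` X `\` Y|)%:R * K *+ 2.
Proof.
move=> phiK cardXY.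
rewrite (big_fsetID _ (mem Y)) (big_fsetID _ (mem X) Y) /=.
have -> : \sum_(x <- [fset x | x in X & x \in Y]) phi x =
          \sum_(x <- [fset x | x in Y & x \in X]) phi x.
  by apply: eq_fbigl => x; rewrite !inE andbC.
rewrite addrC opprD addrA addrK.
have -> : [fset x | x in X & x \notin Y] = X `\` Y.
  by apply/fsetP => x; rewrite !inE andbC.
have -> : [fset x | x in Y & x \notin X] = Y `\` X.
  by apply/fsetP => x; rewrite !inE andbC.
have cardYX : #|` Y `\` X| = #|` X `\` Y| by rewrite !cardfsD cardXY fsetIC.
rewrite (le_trans (ler_normB _ _)) // mulr2n.
by apply: lerD; [|rewrite -cardYX]; exact: ler_norm_sum_seq.
Qed.

Lemma ler_norm_sum_translate (R : numDomainType) (G : choiceType) (o : grp_ops G)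
    (grp : is_group o) (F : {fset G}) u (phi : G -> R) K :
  (forall x, `|phi x| <= K) ->
  `|\sum_(x <- F) phi (gmul o u x) - \sum_(x <- F) phi x| <=
     (#|` [fset gmul o u x | x in F] `\` F|)%:R * K *+ 2.
Proof.
move=> phiK; have inj_u : {in F &, injective (gmul o u)} by move=> x y _ _ /(gmulI grp).
have -> : \sum_(x <- F) phi (gmul o u x) = \sum_(y <- [fset gmul o u x | x in F]) phi y.
  by rewrite big_imfset.
by apply: ler_norm_sumB_card => //; exact: card_in_imfset.
Qed.

Local Close Scope fset_scope.

(** * The law of K *)

Lemma invX5_le_telescope (R : realFieldType) (x y : R) :
  0 < x -> 0 < y -> y ^+ 4 + 1 = x ^+ 4 -> (x ^+ 5)^-1 <= 4%:R * (y^-1 - x^-1).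
Proof.
move=> x0 y0 xy4.
have le_yx : y <= x.
  by rewrite -(ler_pXn2r (isT : (0 < 4)%N)) ?nnegrE ?ltW //; lra.
have dx : 0 <= x - y by rewrite subr_ge0.
have sum_le : x ^+ 3 + x ^+ 2 * y + x * y ^+ 2 + y ^+ 3 <= 4%:R * x ^+ 3.
  have : y ^+ 3 <= x ^+ 3 by rewrite ler_pXn2r // nnegrE ltW.
  have : 0 <= x ^+ 2 * (x - y) by rewrite mulr_ge0 ?sqr_ge0.
  have : 0 <= x * ((x - y) * (x + y)) by rewrite !mulr_ge0 // ltW // addr_gt0.
  lra.
have one_le : 1 <= 4%:R * x ^+ 3 * (x - y).
  have e : (x - y) * (x ^+ 3 + x ^+ 2 * y + x * y ^+ 2 + y ^+ 3) = x ^+ 4 - y ^+ 4.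
    by ring.
  rewrite -xy4 (addrC (y ^+ 4)) addrK in e.
  by have := ler_wpM2l dx sum_le; rewrite e mulrC.
have key : y <= 4%:R * x ^+ 4 * (x - y) by nra.
have -> : 4%:R * (y^-1 - x^-1) = (x ^+ 5)^-1 + (4%:R * x ^+ 4 * (x - y) - y) / (x ^+ 5 * y).
  by field; rewrite !gt_eqF ?exprn_gt0.
by rewrite lerDl divr_ge0 ?subr_ge0 // ltW // mulr_gt0 ?exprn_gt0.
Qed.

Lemma exprn_mul_nat_subr_le1 (R : realDomainType) (p : R) n :
  0 <= p <= 1 -> p ^+ n * (n%:R * (1 - p)) <= 1.
Proof.
move=> /andP[p_ge0 p_le1]; elim: n => [|n IHn]; first by rewrite mul0r mulr0 ler01.
have -> : p ^+ n.+1 * (n.+1%:R * (1 - p)) =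
          p * (p ^+ n * (n%:R * (1 - p))) + p ^+ n.+1 * (1 - p).
  by rewrite -natr1 exprS; ring.
have : p * (p ^+ n * (n%:R * (1 - p))) <= p by rewrite ler_piMr.
have : p ^+ n.+1 * (1 - p) <= 1 - p by rewrite ler_piMl ?subr_ge0 // exprn_ile1.
lra.
Qed.

Section Weights.
Variable R : realType.

Definition inv_pow54 (k : nat) : R := (k%:R : R) `^ (- (5%:R / 4%:R)).

Definition massK (a b : nat) : R := \sum_(a <= k < b) weightK R k.

Lemma inv_pow54_ge0 k : 0 <= inv_pow54 k.
Proof. exact: powR_ge0. Qed.

Lemma inv_pow54E k : inv_pow54 k = (((k%:R : R) `^ 4%:R^-1) ^+ 5)^-1.
Proof. by rewrite /inv_pow54 powRN mulrC powRrM powR_mulrn // powR_ge0. Qed.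

Lemma powR_quarterK (x : R) : 0 <= x -> (x `^ 4%:R^-1) ^+ 4 = x.
Proof.
by move=> x0; rewrite -powR_mulrn ?powR_ge0 // -powRrM mulVf ?pnatr_eq0 // powRr1.
Qed.

Lemma inv_pow54_telescope k : (1 <= k)%N ->
  inv_pow54 k.+1 <= 4%:R * ((k%:R : R) `^ (- 4%:R^-1) - (k.+1%:R : R) `^ (- 4%:R^-1)).
Proof.
move=> k_ge1; rewrite inv_pow54E !powRN.
by apply: invX5_le_telescope; rewrite ?powR_gt0 ?ltr0n // !powR_quarterK // -natr1.
Qed.

Lemma sum_inv_pow54_le5 n : \sum_(1 <= k < n) inv_pow54 k <= 5%:R.
Proof.
suff tail n' : \sum_(1 <= k < n'.+2) inv_pow54 k <= 5%:R - 4%:R * (n'.+1%:R : R) `^ (- 4%:R^-1).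
  case: n => [|[|n]]; try by rewrite big_geq ?ler0n.
  by apply: le_trans (tail n) _; rewrite gerBl mulr_ge0 ?powR_ge0.
elim: n' => [|n' IHn]; first by rewrite big_nat1 /inv_pow54 !powR1; lra.
by rewrite big_nat_recr //=; have := inv_pow54_telescope (ltn0Sn n'); lra.
Qed.

Lemma nondecreasing_sum_inv_pow54 :
  nondecreasing_seq (fun n => \sum_(1 <= k < n) inv_pow54 k).
Proof.
move=> m n le_mn; case: m le_mn => [|m] le_mn.
  by rewrite big_geq // sumr_ge0 // => k _; exact: inv_pow54_ge0.
rewrite (big_cat_nat _ le_mn) //= lerDl.
by rewrite sumr_ge0 // => k _; exact: inv_pow54_ge0.
Qed.

Lemma sum_inv_pow54_le_norm_const n : \sum_(1 <= k < n) inv_pow54 k <= norm_const R.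
Proof.
apply: nondecreasing_cvgn_le; first exact: nondecreasing_sum_inv_pow54.
apply: nondecreasing_is_cvgn; first exact: nondecreasing_sum_inv_pow54.
by exists 5%:R => _ [m _ <-]; exact: sum_inv_pow54_le5.
Qed.

Lemma norm_const_gt0 : 0 < norm_const R.
Proof.
apply: lt_le_trans ltr01 (le_trans _ (sum_inv_pow54_le_norm_const 2)).
by rewrite big_nat1 /inv_pow54 powR1.
Qed.

Lemma weightK_ge0 k : 0 <= weightK R k.
Proof. by rewrite divr_ge0 ?powR_ge0 // ltW // norm_const_gt0. Qed.

Lemma massK_ge0 a b : 0 <= massK a b.
Proof. by rewrite sumr_ge0 // => k _; exact: weightK_ge0. Qed.

Lemma massK1_le1 n : massK 1 n <= 1.
Proof.
rewrite /massK -mulr_suml ler_pdivrMr ?norm_const_gt0 // mul1r.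
exact: sum_inv_pow54_le_norm_const.
Qed.

Lemma massK_le_compl j n : (1 <= j)%N -> massK j n <= 1 - massK 1 j.
Proof.
move=> j_ge1; have [le_nj|lt_jn] := leqP n j.
  by rewrite /massK big_geq // subr_ge0 massK1_le1.
by rewrite lerBrDl /massK -big_cat_nat ?(ltnW lt_jn) //; exact: massK1_le1.
Qed.

Lemma inv_pow54_le (a b : nat) : (0 < a)%N -> (a <= b)%N -> inv_pow54 b <= inv_pow54 a.
Proof.
move=> a_gt0 le_ab; rewrite /inv_pow54 !powRN lef_pV2 ?posrE ?powR_gt0 ?ltr0n //.
  by apply: ge0_ler_powR; rewrite ?nnegrE ?ler0n ?ler_nat // divr_ge0 ?ler0n.
exact: leq_trans le_ab.
Qed.

Lemma massK_double_ge j : (0 < j)%N ->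
  j%:R * inv_pow54 (2 * j) / norm_const R <= massK j (2 * j).
Proof.
move=> j_gt0; rewrite /massK -mulr_suml ler_pM2r ?invr_gt0 ?norm_const_gt0 //.
have -> : j%:R * inv_pow54 (2 * j) = \sum_(j <= k < 2 * j) inv_pow54 (2 * j).
  by rewrite sumr_const_nat mulr_natl mul2n -addnn addnK.
apply: ler_sum_nat => k /andP[le_jk lt_k2j]; apply: inv_pow54_le (ltnW lt_k2j).
exact: leq_trans le_jk.
Qed.

Lemma inv_pow54_16N4 (N : nat) : inv_pow54 (2 * (8 * N ^ 4)) = ((2 * N)%:R ^+ 5)^-1.
Proof.
have -> : (2 * (8 * N ^ 4))%N = ((2 * N) ^ 4)%N by rewrite expnMn; lia.
rewrite /inv_pow54 natrX -powR_mulrn ?ler0n // -powRrM.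
have -> : 4%:R * - (5%:R / 4%:R) = - 5%:R :> R by field.
by rewrite powR_invn ?ler0n.
Qed.

Lemma ler_sum_weightK (e : nat -> R) (j n : nat) (b C : R) :
  (1 <= j)%N -> 0 <= b -> 0 <= C ->
  (forall k, (1 <= k < j)%N -> e k <= b) -> (forall k, (j <= k)%N -> e k <= C) ->
  \sum_(1 <= k < n) weightK R k * e k <= massK 1 j * b + (1 - massK 1 j) * C.
Proof.
move=> j_ge1 b_ge0 C_ge0 e_lt e_ge.
pose e' k := if (k < j)%N then b else C.
apply: (@le_trans _ _ (\sum_(1 <= k < n) weightK R k * e' k)).
  apply: ler_sum_nat => k /andP[k_ge1 _]; apply: ler_wpM2l; first exact: weightK_ge0.
  by rewrite /e'; case: ltnP => [lt_kj|/e_ge//]; apply: e_lt; rewrite k_ge1 lt_kj.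
apply: (@le_trans _ _ (\sum_(1 <= k < maxn n j) weightK R k * e' k)).
  rewrite (big_nat_widen 1 n (maxn n j)) ?leq_maxl // [leRHS](bigID (fun k => (k < n)%N)) /=.
  by rewrite lerDl sumr_ge0 // => k _; rewrite mulr_ge0 ?weightK_ge0 // /e'; case: ifP.
rewrite (big_cat_nat j_ge1 (leq_maxr n j)) /=.
have -> : \sum_(1 <= k < j) weightK R k * e' k = massK 1 j * b.
  by rewrite /massK mulr_suml; apply: eq_big_nat => k /andP[_ lt_kj]; rewrite /e' lt_kj.
have -> : \sum_(j <= k < maxn n j) weightK R k * e' k = massK j (maxn n j) * C.
  by rewrite /massK mulr_suml; apply: eq_big_nat => k /andP[le_jk _]; rewrite /e' ltnNge le_jk.
by rewrite lerD2l ler_wpM2r // massK_le_compl.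
Qed.

(** For j = 8 N^4 we have 2 j = (2 N)^4, which makes the lower bound
    j (2 j)^(-5/4) / c on Pr(j <= K < 2 j) explicit. *)
Lemma massK_compl_ge N : (1 <= N)%N ->
  (4%:R * N%:R * norm_const R)^-1 <= 1 - massK 1 (8 * N ^ 4).
Proof.
move=> N_ge1; have j_gt0 : (0 < 8 * N ^ 4)%N by rewrite muln_gt0 expn_gt0 N_ge1.
apply: le_trans (le_trans (massK_double_ge j_gt0) (massK_le_compl _ j_gt0)).
rewrite inv_pow54_16N4 !natrM le_eqVlt; apply/predU1P; left.
by field; rewrite !gt_eqF ?norm_const_gt0 ?ltr0n.
Qed.

Lemma massK_expn_le N : (1 <= N)%N ->
  massK 1 (8 * N ^ 4) ^+ (8 * N ^ 4) <= norm_const R / N%:R.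
Proof.
move=> N_ge1; have c_gt0 := norm_const_gt0.
have N_gt0 : 0 < (N%:R : R) by rewrite ltr0n.
have p01 : 0 <= massK 1 (8 * N ^ 4) <= 1 by rewrite massK_ge0 massK1_le1.
have le_jp : N%:R / norm_const R <= (8 * N ^ 4)%:R * (1 - massK 1 (8 * N ^ 4)).
  apply: le_trans (ler_wpM2l (ler0n _ _) (massK_compl_ge N_ge1)).
  have -> : (8 * N ^ 4)%:R * (4%:R * N%:R * norm_const R)^-1 = (2 * N ^ 3)%:R / norm_const R.
    by rewrite natrM natrX natrM natrX; field; rewrite !gt_eqF.
  have le_N3 : (N <= N ^ 3)%N by rewrite -{1}(expn1 N) leq_pexp2l.
  by rewrite ler_pM2r ?invr_gt0 // ler_nat; lia.
have := le_trans (ler_wpM2l (exprn_ge0 _ (andP p01).1) le_jp) (exprn_mul_nat_subr_le1 _ p01).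
by rewrite mulrA ler_pdivrMr // mul1r ler_pdivlMr.
Qed.

Lemma translate_error_le N M : (1 <= N)%N -> 0 <= M ->
  M *+ 2 * massK 1 (8 * N ^ 4) ^+ (8 * N ^ 4).+1 + 6%:R * M / (8 * N ^ 4)%:R <=
  (M *+ 2 * norm_const R + M) / N%:R.
Proof.
move=> N_ge1 M_ge0.
have N_gt0 : 0 < (N%:R : R) by rewrite ltr0n.
have p_ge0 := massK_ge0 1 (8 * N ^ 4); have p_le1 := massK1_le1 (8 * N ^ 4).
have le_p : massK 1 (8 * N ^ 4) ^+ (8 * N ^ 4).+1 <= norm_const R / N%:R.
  by apply: le_trans (massK_expn_le N_ge1); rewrite exprSr ler_piMr ?exprn_ge0.
have le_6 : 6%:R * M / (8 * N ^ 4)%:R <= M / N%:R.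
  rewrite natrM natrX ler_pdivrMr ?mulr_gt0 ?exprn_gt0 ?ltr0n //.
  have -> : M / N%:R * (8%:R * N%:R ^+ 4) = 8%:R * M * N%:R ^+ 3 by field; rewrite gt_eqF.
  have : 1 <= (N%:R : R) ^+ 3 by rewrite exprn_ege1 ?ler1n.
  move: (N%:R ^+ 3 : R) => y; nra.
have := ler_wpM2l (mulrn_wge0 2 M_ge0) le_p; lra.
Qed.

End Weights.

(** * One side of the construction *)

Lemma ler_dist_lim (R : realType) (u v : nat -> R) (a b e : R) :
  (u @ \oo --> a)%classic -> (v @ \oo --> b)%classic ->
  (forall n, `|u n - v n| <= e) -> `|a - b| <= e.
Proof.
move=> u_a v_b le_e; have : ((fun n => `|u n - v n|) @ \oo --> `|a - b|)%classic.
  by apply: cvg_norm; apply: cvgB.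
by move/cvgr_to_le; apply; exact: nearW.
Qed.

Lemma ler_norm_convB (R : numDomainType) (t a1 a2 b1 b2 alpha beta : R) :
  0 <= t <= 1 -> `|a1 - a2| <= alpha -> `|b1 - b2| <= beta ->
  `|(t * a1 + (1 - t) * b1) - (t * a2 + (1 - t) * b2)| <= t * alpha + (1 - t) * beta.
Proof.
move=> /andP[t_ge0 t_le1] le_a le_b.
have -> : (t * a1 + (1 - t) * b1) - (t * a2 + (1 - t) * b2) =
          t * (a1 - a2) + (1 - t) * (b1 - b2) by ring.
have t'_ge0 : 0 <= 1 - t by rewrite subr_ge0.
rewrite (le_trans (ler_normD _ _)) // !normrM (ger0_norm t_ge0) (ger0_norm t'_ge0).
by apply: lerD; apply: ler_wpM2l.
Qed.

Lemma ler_norm_divB (R : numFieldType) (X Y D beta : R) :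
  0 <= D -> 0 <= beta -> `|X - Y| <= D * beta -> `|X / D - Y / D| <= beta.
Proof.
move=> D_ge0 beta_ge0; rewrite -mulrBl.
have [->|D_neq0] := eqVneq D 0; first by rewrite invr0 mulr0 normr0.
have D_gt0 : 0 < D by rewrite lt_def D_neq0.
by rewrite normrM normfV (ger0_norm D_ge0) ler_pdivrMr // mulrC.
Qed.

Lemma exp2Vn_ge0_le1 (R : numFieldType) k : 0 <= (2%:R ^- k : R) <= 1.
Proof.
rewrite invr_ge0 exprn_ge0 ?ler0n //= invf_le1 ?exprn_gt0 ?ltr0n //.
by rewrite exprn_ege1 // ler1n.
Qed.

Lemma exp2Vn_le_invn (R : numFieldType) k : (1 <= k)%N -> (2%:R ^- k : R) <= k%:R^-1.
Proof.
move=> k_ge1; rewrite lef_pV2 ?posrE ?exprn_gt0 ?ltr0n //.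
by rewrite -natrX ler_nat ltnW // ltn_expl.
Qed.

Section ConstructionSide.
Variables (R : realType) (G G' : choiceType) (o : grp_ops G) (c : nat -> G).
Variables (A F S : nat -> {fset G}) (Fp : nat -> {fset G'}) (b1 b2 : nat -> G).
Variable psi : nat -> G' -> G.
Hypothesis side : construction_side R o c A F S Fp b1 b2 psi.

Local Notation blue k f1 f2 := (gmul o (gmul o (gmul o f1 (b1 k)) (psi k f2)) (b2 k)).
Local Notation cond := (cond_term o c F Fp b1 b2 psi).

Lemma A_subset i k : (1 <= i)%N -> (i <= k)%N -> {subset A i <= A k}.
Proof.
move=> i_ge1; elim: k => [|k IHk]; first by rewrite leqn0 => /eqP i0; rewrite i0 in i_ge1.
rewrite leq_eqVlt ltnS => /predU1P[-> // | le_ik] x /(IHk le_ik) xAk.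
by case: side => _ /(_ k (leq_trans i_ge1 le_ik))[_ [_ [_ [_ [-> _]]]]]; rewrite !inE xAk.
Qed.

Lemma one_in_A i : (1 <= i)%N -> gone o \in A i.
Proof. by move=> i_ge1; apply: (A_subset (leqnn 1) i_ge1); case: side => -> _; rewrite inE. Qed.

Lemma c_in_A i : (1 <= i)%N -> c i \in A i.+1.
Proof.
by case: side => _ /[apply] -[_ [_ [_ [_ [-> _]]]]]; rewrite !inE eqxx !orbT.
Qed.

Lemma blue_in_A i f1 f2 : (1 <= i)%N -> f1 \in F i -> f2 \in Fp i -> blue i f1 f2 \in A i.+1.
Proof.
case: side => _ /[apply] -[_ [_ [_ [_ [-> [psiS _]]]]]] f1F f2Fp.
rewrite !inE; apply/orP; left; apply/orP; right.
apply: mem_fsmul; last by rewrite inE.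
by apply: mem_fsmul; [apply: mem_fsmul; rewrite ?inE | exact: psiS].
Qed.

Lemma card_translate_F k u : (1 <= k)%N -> u \in fspow o (A k) k.+1 ->
  (#|` [fset gmul o u x | x in F k] `\` F k|%fset)%:R <= k%:R^-1 * (#|` F k|)%:R :> R.
Proof.
case: side => _ /[apply] -[[_ lt_card] _] uA; apply: le_trans (ltW lt_card); rewrite ler_nat.
apply: fsubset_leq_card; apply/fsubsetP => y; rewrite !in_fsetD => /andP[-> /=].
by move=> /imfsetP[x xF ->]; apply: mem_fsmul.
Qed.

Lemma cond_term_dist_le (phi1 phi2 : G -> R) k b : (1 <= k)%N -> 0 <= b ->
  {in A k.+1, forall y, `|phi1 y - phi2 y| <= b} -> `|cond phi1 k - cond phi2 k| <= b.
Proof.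
move=> k_ge1 b_ge0 le_b.
have -> : b = 2%:R ^- k * b + (1 - 2%:R ^- k) * b by ring.
apply: ler_norm_convB; [exact: exp2Vn_ge0_le1 | exact/le_b/c_in_A |].
apply: ler_norm_divB; rewrite ?mulr_ge0 ?ler0n // -sumrB -mulrA.
apply: ler_norm_sum_seq => f1 f1F; rewrite -sumrB.
by apply: ler_norm_sum_seq => f2 f2Fp; exact/le_b/blue_in_A.
Qed.

Hypothesis grp : is_group o.

(** The blue part averages first over the (A_k^(k+1), 1/k)-invariant set F_k,
    which absorbs the translation; the red part has weight 2^-k <= 1/k. *)
Lemma cond_term_translate_le (h : G -> R) M u v k : (1 <= k)%N ->
  (forall y, `|h y| <= M) -> u \in fspow o (A k) k.+1 -> v \in fspow o (A k) k.+1 ->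
  `|cond (fun x => h (gmul o u x)) k - cond (fun x => h (gmul o v x)) k| <= 6%:R * M / k%:R.
Proof.
move=> k_ge1 hM uA vA.
have M_ge0 : 0 <= M by apply: le_trans (hM u).
have k_gt0 : 0 < (k%:R : R) by rewrite ltr0n.
pose Psi y := \sum_(f2 <- Fp k) h (blue k y f2).
have PsiM y : `|Psi y| <= (#|` Fp k|)%:R * M by apply: ler_norm_sum_seq.
have sumPsi w : \sum_(f1 <- F k) \sum_(f2 <- Fp k) h (gmul o w (blue k f1 f2)) =
                \sum_(f1 <- F k) Psi (gmul o w f1).
  by apply: eq_bigr => f1 _; apply: eq_bigr => f2 _; rewrite !(gmulA grp).
have translate w : w \in fspow o (A k) k.+1 ->
    `|\sum_(f1 <- F k) Psi (gmul o w f1) - \sum_(f1 <- F k) Psi f1| <=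
    k%:R^-1 * (#|` F k|)%:R * ((#|` Fp k|)%:R * M) *+ 2.
  move=> wA; apply: le_trans (ler_norm_sum_translate grp _ _ PsiM) _.
  by rewrite lerMn2r /= ler_wpM2r ?mulr_ge0 ?ler0n // card_translate_F.
have [t_ge0 t_le1] := andP (exp2Vn_ge0_le1 R k).
have kV_ge0 : 0 <= k%:R^-1 :> R by rewrite invr_ge0 ler0n.
apply: (@le_trans _ _ (2%:R ^- k * (M *+ 2) + (1 - 2%:R ^- k) * (4%:R * M / k%:R))).
  apply: ler_norm_convB; first by rewrite t_ge0.
    by rewrite (le_trans (ler_normB _ _)) // mulr2n lerD.
  apply: ler_norm_divB; rewrite ?mulr_ge0 ?ler0n // !sumPsi.
  rewrite -(subrKA (\sum_(f1 <- F k) Psi f1)); apply: le_trans (ler_normD _ _) _.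
  rewrite (distrC (\sum_(f1 <- F k) Psi f1)).
  apply: le_trans (lerD (translate _ uA) (translate _ vA)) _; lra.
have le_t : 2%:R ^- k * (M *+ 2) <= k%:R^-1 * (M *+ 2).
  by rewrite ler_wpM2r ?mulrn_wge0 // exp2Vn_le_invn.
have le_1t : (1 - 2%:R ^- k) * (4%:R * M / k%:R) <= 4%:R * M / k%:R.
  by rewrite ler_piMl ?divr_ge0 ?mulr_ge0 ?ler0n // lerBlDr lerDl.
apply: le_trans (lerD le_t le_1t) _; lra.
Qed.

Section Harmonic.
Variables (f : G -> R) (M : R).
Hypothesis fM : forall x, `|f x| <= M.
Hypothesis f_harmonic :
  forall g, expect_proj_is o c F Fp b1 b2 psi (fun x => f (gmul o g x)) (f g).

Let M_ge0 : 0 <= M. Proof. exact: le_trans (fM (gone o)). Qed.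

(** Steps with K < j keep the walk in A_j, so they only cost one more factor
    A_j; steps with K >= j are controlled by [cond_term_translate_le] as long
    as u, v lie in A_j^(j+1). *)
Lemma harmonic_step j r b : (1 <= j)%N -> (r <= j.+1)%N -> 0 <= b ->
  (forall g u v, u \in fspow o (A j) r.+1 -> v \in fspow o (A j) r.+1 ->
     `|f (gmul o g u) - f (gmul o g v)| <= b) ->
  forall g u v, u \in fspow o (A j) r -> v \in fspow o (A j) r ->
  `|f (gmul o g u) - f (gmul o g v)| <= massK R 1 j * b + (1 - massK R 1 j) * (6%:R * M / j%:R).
Proof.
move=> j_ge1 le_rj b_ge0 le_b g u v uA vA.
apply: ler_dist_lim (@f_harmonic (gmul o g u)) (@f_harmonic (gmul o g v)) _ => n.
rewrite -sumrB; apply: le_trans (ler_norm_sum _ _ _) _.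
under eq_bigr do rewrite -mulrBr normrM (ger0_norm (weightK_ge0 _ _)).
apply: ler_sum_weightK; rewrite ?divr_ge0 ?mulr_ge0 ?ler0n // => k.
  move=> /andP[k_ge1 lt_kj]; apply: cond_term_dist_le => // y yA; rewrite -!(gmulA grp).
  by apply: le_b; apply: mem_fsmul => //; apply: A_subset yA.
move=> le_jk; have k_ge1 := leq_trans j_ge1 le_jk.
have sub_k : {subset fspow o (A j) r <= fspow o (A k) k.+1}.
  move=> w /(fspow_subset (A_subset j_ge1 le_jk)).
  by apply: (fspow_le grp (one_in_A k_ge1)); lia.
have shift w : (fun x => f (gmul o (gmul o g w) x)) = (fun x => f (gmul o g (gmul o w x))).
  by apply: funext => x; rewrite (gmulA grp).
rewrite !shift.
apply: le_trans (cond_term_translate_le k_ge1 (fun y => fM _) (sub_k _ uA) (sub_k _ vA)) _.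
by rewrite ler_wpM2l ?mulr_ge0 ?ler0n // lef_pV2 ?posrE ?ltr0n // ler_nat.
Qed.

Lemma harmonic_iterate j m r : (1 <= j)%N -> (r + m = j + 2)%N ->
  forall g u v, u \in fspow o (A j) r -> v \in fspow o (A j) r ->
  `|f (gmul o g u) - f (gmul o g v)| <= M *+ 2 * massK R 1 j ^+ m + 6%:R * M / j%:R.
Proof.
move=> j_ge1; elim: m r => [|m IHm] r e_rm g u v uA vA.
  apply: le_trans (ler_normB _ _) _; have := fM (gmul o g u); have := fM (gmul o g v).
  have : 0 <= 6%:R * M / j%:R by rewrite divr_ge0 ?mulr_ge0 ?ler0n.
  rewrite expr0; lra.
have le_rj : (r <= j.+1)%N by lia.
have IH_ge0 : 0 <= M *+ 2 * massK R 1 j ^+ m + 6%:R * M / j%:R.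
  by rewrite addr_ge0 ?mulr_ge0 ?divr_ge0 ?exprn_ge0 ?mulrn_wge0 ?ler0n ?massK_ge0.
have IH := IHm r.+1 (etrans (addSnnS r m) e_rm).
apply: le_trans (harmonic_step j_ge1 le_rj IH_ge0 IH g uA vA) _.
rewrite exprS; lra.
Qed.

Lemma harmonic_translate_le j g a : (1 <= j)%N -> a \in A j ->
  `|f (gmul o g a) - f g| <= M *+ 2 * massK R 1 j ^+ j.+1 + 6%:R * M / j%:R.
Proof.
move=> j_ge1 aA; rewrite -{2}(gmulg1 grp g).
apply: (harmonic_iterate (r := 1%N)) => //; first by rewrite add1n addn2.
  exact: (mem_fspow1 grp aA).
exact/(mem_fspow1 grp)/one_in_A.
Qed.

Lemma harmonic_translate_invariant :
  (forall a, exists2 m, (1 <= m)%N & c m = a) -> forall g a, f (gmul o g a) = f g.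
Proof.
move=> c_onto g a; have [m m_ge1 <-] := c_onto a.
apply/eqP; rewrite -subr_eq0 -normr_le0.
have K_lim : ((fun N => harmonic N * (M *+ 2 * norm_const R + M)) @ \oo --> (0 : R))%classic.
  by rewrite -[0 : R](mul0r (M *+ 2 * norm_const R + M)); exact: cvgMl cvg_harmonic.
apply: cvgr_to_ge K_lim _; exists m => // N /= le_mN.
have le_N4 : (N.+1 <= N.+1 ^ 4)%N by rewrite -{1}(expn1 N.+1) leq_pexp2l.
have cA : c m \in A (8 * N.+1 ^ 4) by apply: (A_subset _ _ (c_in_A m_ge1)); lia.
apply: le_trans (harmonic_translate_le g _ cA) _; first lia.
by rewrite [leRHS]mulrC; apply: translate_error_le.
Qed.

End Harmonic.

Lemma construction_side_liouville :
  (forall a, exists2 m, (1 <= m)%N & c m = a) -> liouville_proj R o c F Fp b1 b2 psi.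
Proof.
move=> c_onto f [M fM] f_harmonic g h.
have invariant := harmonic_translate_invariant fM f_harmonic c_onto.
by rewrite -(invariant g (gmul o (ginv o g) h)) (gmulA grp) (gmulgV grp) (gmul1g grp).
Qed.

End ConstructionSide.

Unset Implicit Arguments.
Set Strict Implicit.
Local Close Scope ring_scope.

Theorem mainTheorem8 (R : realType)
  (G1 G2 : countType) (o1 : grp_ops G1) (o2 : grp_ops G2)
  (grp1 : is_group o1) (grp2 : is_group o2)
  (ntr1 : nontrivial_grp o1) (ntr2 : nontrivial_grp o2)
  (am1 : amenable R o1) (am2 : amenable R o2)
  (icc1 : ICC o1) (icc2 : ICC o2)
  (c : nat -> G1 * G2)
  (c_enum : forall x : G1 * G2, exists i : nat, (1 <= i)%N /\ c i = x /\
              forall i', (1 <= i')%N -> c i' = x -> i' = i)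
  (A1 F1 S1 : nat -> {fset G1}) (b1' b1'' : nat -> G1) (psi1 : nat -> G2 -> G1)
  (A2 F2 S2 : nat -> {fset G2}) (b2' b2'' : nat -> G2) (psi2 : nat -> G1 -> G2)
  (side1 : construction_side R o1 (fun i => (c i).1) A1 F1 S1 F2 b1' b1'' psi1)
  (side2 : construction_side R o2 (fun i => (c i).2) A2 F2 S2 F1 b2' b2'' psi2) :
  liouville_proj R o1 (fun i => (c i).1) F1 F2 b1' b1'' psi1 /\
  liouville_proj R o2 (fun i => (c i).2) F2 F1 b2' b2'' psi2.
Proof.
split.
- apply: (construction_side_liouville side1 grp1) => a.
  by have [i [i_ge1 [ci _]]] := c_enum (a, gone o2); exists i; rewrite ?ci.
- apply: (construction_side_liouville side2 grp2) => a.
  by have [i [i_ge1 [ci _]]] := c_enum (gone o1, a); exists i; rewrite ?ci.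
Qed.
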